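(* Consider the convex problem of minimizing $F(\beta)=(n^{(0)})^{-1/2}\sum_{t=1}^k\|Y^{(t)}-\mathbf X^{(t)}\beta^{(t)}\|+\lambda\sum_{l=1}^p\|\beta_{(l)}\|$ over $\beta\in\mathbb R^{pk}$, solved by the scaled iterative thresholding algorithm described in the context with rescaling constant $K_0>0$. Assume $\lambda>0$ and $\min_{1\le t\le k}\inf_{\zeta\in A^t}\|\mathbf X^{(t)}\zeta-Y^{(t)}\|>c_0$ for some constant $c_0>0$, where $A^t=\{v\beta(m)^{(t)}+(1-v)\beta(m+1)^{(t)}:v\in[0,1],\ m=0,1,\dots\}$. Then for large enough $K_0$, the sequence of iterates $\beta(m)$ converges to the global optimum (a global minimizer) of the problem.
   Context: Data: for $t=1,\dots,k$, $Y^{(t)}\in\mathbb R^{n^{(t)}}$ and $\mathbf X^{(t)}\in\mathbb R^{n^{(t)}\times p}$; $n^{(0)}=\min_tn^{(t)}$. For $\beta=(\beta^{(1)\prime},\dots,\beta^{(k)\prime})'\in\mathbb R^{pk}$ with $\beta^{(t)}\in\mathbb R^p$, $\beta_{(l)}=(\beta^{(1)}_l,\dots,\beta^{(k)}_l)'\in\mathbb R^k$. $\|\cdot\|$ is the Euclidean norm. Algorithm: Step 1 (rescaling): replace $Y^{(t)}$ by $Y^{(t)}/K_0$, $\mathbf X^{(t)}$ by $\mathbf X^{(t)}/K_0$ for all $t$, and $\lambda$ by $\lambda/K_0$ (this does not change the minimizer); below $Y^{(t)},\mathbf X^{(t)},\lambda$ denote the rescaled quantities. Step 2 (iteration): from an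 initial $\beta(0)\in\mathbb R^{pk}$, given $\beta(m)$ define $R(m)^{(t)}=(\mathbf X^{(t)})'(\mathbf X^{(t)}\beta(m)^{(t)}-Y^{(t)})/[(n^{(0)})^{1/2}\|\mathbf X^{(t)}\beta(m)^{(t)}-Y^{(t)}\|]\in\mathbb R^p$, stack them into $R(m)\in\mathbb R^{pk}$ with groups $R(m)_{(l)}\in\mathbb R^k$ as for $\beta$, let $A(m)=\sum_{t=1}^k[(n^{(0)})^{1/2}\|\mathbf X^{(t)}\beta(m)^{(t)}-Y^{(t)}\|]^{-1}$, and set $\beta(m+1)_{(l)}=\vec\Theta\big(\beta(m)_{(l)}-R(m)_{(l)}/A(m);\lambda/A(m)\big)$ for $l=1,\dots,p$, where $\vec\Theta(0;\lambda)=0$ and $\vec\Theta(a;\lambda)=a\,(\|a\|-\lambda)_+/\|a\|$ for $a\ne0$ (multivariate soft-thresholding). *)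

From HB Require Import structures.
From mathcomp Require Import all_boot all_order all_algebra.
From mathcomp Require Import all_classical all_reals all_analysis.
Set Implicit Arguments.
Unset Strict Implicit.
Unset Printing Implicit Defensive.
Import Order.TTheory GRing.Theory Num.Theory.
Local Open Scope ring_scope.

(* A coefficient vector beta in R^{pk}
   is stored as a matrix B : 'M_(p, k):  column t is beta^{(t)} in R^p,
   row l is beta_{(l)} in R^k. *)

Definition nmax (k : nat) (n : 'I_k -> nat) : nat := \big[maxn/0%N]_(t < k) n t.
Definition n0 (k : nat) (n : 'I_k -> nat) : nat :=
  \big[minn/(nmax n)]_(t < k) n t.

Definition cnorm (R : realType) (m : nat) (v : 'cV[R]_m) : R :=
  Num.sqrt (\sum_(i < m) v i 0 ^+ 2).
Definition rnorm (R : realType) (m : nat) (v : 'rV[R]_m) : R :=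
  Num.sqrt (\sum_(j < m) v 0 j ^+ 2).

Definition objF (R : realType) (k p : nat) (n : 'I_k -> nat)
  (X : forall t : 'I_k, 'M[R]_(n t, p)) (Y : forall t : 'I_k, 'cV[R]_(n t))
  (lam : R) (B : 'M[R]_(p, k)) : R :=
  (Num.sqrt ((n0 n)%:R))^-1 * (\sum_(t < k) cnorm (Y t - X t *m col t B))
  + lam * (\sum_(l < p) rnorm (row l B)).

Definition soft_thr (R : realType) (m : nat) (a : 'rV[R]_m) (lam : R) : 'rV[R]_m :=
  if a == 0 then 0 else (Num.max (rnorm a - lam) 0 / rnorm a) *: a.

Section Iteration.
Variables (R : realType) (k p : nat) (n : 'I_k -> nat)
  (X : forall t : 'I_k, 'M[R]_(n t, p)) (Y : forall t : 'I_k, 'cV[R]_(n t))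
  (lam : R).

Definition rden (B : 'M[R]_(p, k)) (t : 'I_k) : R :=
  Num.sqrt ((n0 n)%:R) * cnorm (X t *m col t B - Y t).

Definition Rmat (B : 'M[R]_(p, k)) : 'M[R]_(p, k) :=
  \matrix_(l < p, t < k)
    ((rden B t)^-1 *: ((X t)^T *m (X t *m col t B - Y t))) l 0.

Definition Acoef (B : 'M[R]_(p, k)) : R := \sum_(t < k) (rden B t)^-1.

Definition ist_step (B : 'M[R]_(p, k)) : 'M[R]_(p, k) :=
  \matrix_(l < p, t < k)
    (soft_thr (row l B - (Acoef B)^-1 *: row l (Rmat B)) (lam / Acoef B)) 0 t.

End Iteration.

Definition scaled_iterates (R : realType) (k p : nat) (n : 'I_k -> nat)
  (X : forall t : 'I_k, 'M[R]_(n t, p)) (Y : forall t : 'I_k, 'cV[R]_(n t))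
  (lam K0 : R) (B0 : 'M[R]_(p, k)) (m : nat) : 'M[R]_(p, k) :=
  iter m (ist_step (fun t => K0^-1 *: X t) (fun t => K0^-1 *: Y t) (lam / K0)) B0.

From HB Require Import structures.
From mathcomp Require Import all_boot all_order all_algebra.
From mathcomp Require Import all_classical all_reals all_analysis.
From mathcomp Require Import ring lra.
Import Order.TTheory GRing.Theory Num.Theory numFieldNormedType.Exports.
Local Open Scope classical_set_scope.
Local Open Scope ring_scope.
Set Implicit Arguments.
Unset Strict Implicit.

(* After rescaling, every design matrix has Frobenius norm at most 1 as soon as
   K0 >= 1 + sum_t ||X^(t)||_F^2, and the residuals along the iterates stay above
   c0/K0.  For u <> 0, ||u + w|| lies between ||u|| + <u,w>/||u|| and that
   bound plus ||w||^2/(2||u||), so the data term is majorized at beta(m) by its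
   linearization plus A(m)/2 ||. - beta(m)||^2, and one step of the algorithm is
   the proximal step (row-wise soft-thresholding) of this majorizer.
   This gives, for the rescaled objective F (which has the same minimizers),
     F(beta(m+1)) + A(m)/2 ||Z - beta(m+1)||^2 <= F(Z) + A(m)/2 ||Z - beta(m)||^2
   for every Z, with 0 < A(m) bounded thanks to the residual bound.  Hence F
   decreases along the iterates, which stay bounded since F is coercive,
   F(beta(m)) tends to inf F, a cluster point is a minimizer, and the distance to
   that minimizer is nonincreasing, so the whole sequence converges to it. *)

Section EuclideanNorm.
Variables (R : realType) (I : finType).
Implicit Types (f g : I -> R) (x y : R).

Definition enorm f : R := Num.sqrt (\sum_i f i ^+ 2).
Definition edot f g : R := \sum_i f i * g i.

Lemma sumsq_ge0 f : 0 <= \sum_i f i ^+ 2.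
Proof. by apply: sumr_ge0 => i _; apply: sqr_ge0. Qed.

Lemma enorm_ge0 f : 0 <= enorm f.
Proof. exact: sqrtr_ge0. Qed.

Lemma enorm_sqr f : enorm f ^+ 2 = \sum_i f i ^+ 2.
Proof. by rewrite sqr_sqrtr // sumsq_ge0. Qed.

Lemma sumsq_eq0 f : \sum_i f i ^+ 2 = 0 -> forall i, f i = 0.
Proof.
move=> /(psumr_eq0P (fun i _ => sqr_ge0 (f i))) f0 i.
by apply/eqP; rewrite -sqrf_eq0 f0.
Qed.

Lemma le_sqr_ge0 x y : 0 <= y -> x ^+ 2 <= y ^+ 2 -> x <= y.
Proof.
move=> y0 le_sqr; apply: le_trans (ler_norm x) _.
by rewrite -(ler_pXn2r (ltn0Sn 1)) ?nnegrE ?normr_ge0 // real_normK ?num_real.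
Qed.

Lemma edotxx f : edot f f = enorm f ^+ 2.
Proof. by rewrite enorm_sqr; apply: eq_bigr => i _; rewrite expr2. Qed.

Lemma edot_sqr_le f g : edot f g ^+ 2 <= (\sum_i f i ^+ 2) * (\sum_i g i ^+ 2).
Proof.
set a := \sum_i f i ^+ 2; set b := \sum_i g i ^+ 2; set c := edot f g.
have lagrange : a * (a * b - c ^+ 2) = \sum_i (a * g i - c * f i) ^+ 2.
  rewrite (eq_bigr (fun i => a ^+ 2 * g i ^+ 2 - (2 * a * c) * (f i * g i)
                             + c ^+ 2 * f i ^+ 2)); last by move=> i _; ring.
  by rewrite big_split sumrB /= -!mulr_sumr -/a -/b -/(edot f g) -/c; ring.
have [a0|a_neq0] := eqVneq a 0.
  have c0 : c = 0 by rewrite /c /edot big1 // => i _; rewrite (sumsq_eq0 a0) mul0r.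
  by rewrite c0 a0 expr0n mul0r.
have a_gt0 : 0 < a by rewrite lt_def a_neq0 sumsq_ge0.
by rewrite -subr_ge0 -(pmulr_rge0 _ a_gt0) lagrange sumsq_ge0.
Qed.

Lemma edot_le f g : edot f g <= enorm f * enorm g.
Proof.
apply: le_sqr_ge0; first by rewrite mulr_ge0 ?enorm_ge0.
by rewrite exprMn !enorm_sqr edot_sqr_le.
Qed.

Lemma enormD_sqr f g :
  enorm (fun i => f i + g i) ^+ 2 = enorm f ^+ 2 + 2 * edot f g + enorm g ^+ 2.
Proof.
rewrite !enorm_sqr /edot mulr_sumr -!big_split /=.
by apply: eq_bigr => i _; ring.
Qed.

Lemma enormD_le f g : enorm (fun i => f i + g i) <= enorm f + enorm g.
Proof.
apply: le_sqr_ge0; first by rewrite addr_ge0 ?enorm_ge0.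
by rewrite enormD_sqr sqrrD; have := edot_le f g; lra.
Qed.

Lemma enormZ x f : enorm (fun i => x * f i) = `|x| * enorm f.
Proof.
rewrite /enorm (eq_bigr (fun i => x ^+ 2 * f i ^+ 2)) => [|i _]; last by rewrite exprMn.
by rewrite -mulr_sumr sqrtrM ?sqr_ge0 // sqrtr_sqr.
Qed.

Lemma ler_norm_enorm f i : `|f i| <= enorm f.
Proof.
rewrite -sqrtr_sqr ler_sqrt ?sumsq_ge0 // (bigD1 i) //= lerDl.
by apply: sumr_ge0 => j _; apply: sqr_ge0.
Qed.

Lemma enorm_le_card f d : 0 <= d -> (forall i, `|f i| <= d) -> enorm f <= #|I|%:R * d.
Proof.
move=> d0 f_le; apply: le_sqr_ge0; first by rewrite mulr_ge0.
rewrite enorm_sqr; apply: le_trans (_ : #|I|%:R * d ^+ 2 <= _).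
  rewrite -sum1_card natr_sum mulr_suml; apply: ler_sum => i _.
  by rewrite mul1r -real_normK ?num_real // lerXn2r ?nnegrE ?normr_ge0.
rewrite exprMn ler_wpM2r ?sqr_ge0 //.
by case: #|I| => [|m]; rewrite ?expr0n // expr2 ler_peMl // ler1n.
Qed.

Lemma enormD_le_tangent f g : 0 < enorm f ->
  enorm (fun i => f i + g i)
    <= enorm f + edot f g / enorm f + enorm g ^+ 2 / (2 * enorm f).
Proof.
move=> f_gt0; have := enormD_sqr f g.
set a := enorm f; set b := enorm (fun i => f i + g i); set c := edot f g.
move=> e; rewrite -subr_ge0.
have -> : a + c / a + enorm g ^+ 2 / (2 * a) - b = (a - b) ^+ 2 / (2 * a).
  have -> : enorm g ^+ 2 = b ^+ 2 - a ^+ 2 - 2 * c by rewrite e; ring.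
  by field; rewrite gt_eqF.
by rewrite divr_ge0 ?sqr_ge0 // mulr_ge0 // ltW.
Qed.

Lemma enormD_ge_tangent f g : 0 < enorm f ->
  enorm f + edot f g / enorm f <= enorm (fun i => f i + g i).
Proof.
move=> f_gt0.
have e : edot f (fun i => f i + g i) = enorm f ^+ 2 + edot f g.
  by rewrite enorm_sqr /edot -big_split /=; apply: eq_bigr => i _; ring.
have cs := edot_le f (fun i => f i + g i); rewrite e in cs.
by rewrite -(ler_pM2l f_gt0) mulrDr mulrCA divff ?gt_eqF // mulr1 -expr2.
Qed.

End EuclideanNorm.

Section VectorNorms.
Variables (R : realType) (m : nat).
Implicit Types (u v : 'cV[R]_m) (a b : 'rV[R]_m).

Lemma cnormE v : cnorm v = enorm (v ^~ 0).
Proof. by []. Qed.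

Lemma rnormE a : rnorm a = enorm (a 0).
Proof. by []. Qed.

Lemma cnormD_le u v : cnorm (u + v) <= cnorm u + cnorm v.
Proof.
rewrite !cnormE (_ : (u + v) ^~ 0 = fun i => u i 0 + v i 0); first exact: enormD_le.
by apply/funext => i; rewrite mxE.
Qed.

Lemma rnormD_le a b : rnorm (a + b) <= rnorm a + rnorm b.
Proof.
rewrite !rnormE (_ : (a + b) 0 = fun j => a 0 j + b 0 j); first exact: enormD_le.
by apply/funext => j; rewrite mxE.
Qed.

Lemma cnormZ (c : R) v : cnorm (c *: v) = `|c| * cnorm v.
Proof.
rewrite !cnormE -enormZ; congr enorm; apply/funext => i; by rewrite mxE.
Qed.

Lemma rnormZ (c : R) a : rnorm (c *: a) = `|c| * rnorm a.
Proof.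
rewrite !rnormE -enormZ; congr enorm; apply/funext => j; by rewrite mxE.
Qed.

Lemma cnormN v : cnorm (- v) = cnorm v.
Proof. by rewrite -scaleN1r cnormZ normrN1 mul1r. Qed.

End VectorNorms.

Lemma cnorm_gt0_dim (R : realType) (m : nat) (v : 'cV[R]_m) : 0 < cnorm v -> (0 < m)%N.
Proof. by case: m v => // v; rewrite /cnorm big_ord0 sqrtr0 ltxx. Qed.

Section FrobeniusNorm.
Variables (R : realType) (m p : nat).
Implicit Types (M : 'M[R]_(m, p)).

Definition frob2 M : R := \sum_i \sum_j M i j ^+ 2.

Lemma frob2_ge0 M : 0 <= frob2 M.
Proof. by apply: sumr_ge0 => i _; apply: sumsq_ge0. Qed.

Lemma frob2Z (c : R) M : frob2 (c *: M) = c ^+ 2 * frob2 M.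
Proof.
rewrite /frob2 mulr_sumr; apply: eq_bigr => i _; rewrite mulr_sumr.
by apply: eq_bigr => j _; rewrite mxE exprMn.
Qed.

Lemma cnorm_mulmx_sqr_le M (d : 'cV[R]_p) :
  cnorm (M *m d) ^+ 2 <= frob2 M * cnorm d ^+ 2.
Proof.
rewrite !cnormE !enorm_sqr /frob2 mulr_suml; apply: ler_sum => i _.
by rewrite mxE; apply: (edot_sqr_le (M i) (d ^~ 0)).
Qed.

Lemma cnorm_mulmx_le M (d : 'cV[R]_p) : frob2 M <= 1 -> cnorm (M *m d) <= cnorm d.
Proof.
move=> M_le1; apply: le_sqr_ge0; first exact: enorm_ge0.
apply: le_trans (cnorm_mulmx_sqr_le M d) _.
by rewrite ler_piMl ?sqr_ge0 ?frob2_ge0.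
Qed.

Lemma edot_trmx_mul M (u : 'cV[R]_m) (d : 'cV[R]_p) :
  edot ((M^T *m u) ^~ 0) (d ^~ 0) = edot (u ^~ 0) ((M *m d) ^~ 0).
Proof.
rewrite /edot; under eq_bigr do rewrite mxE mulr_suml.
rewrite exchange_big /=; apply: eq_bigr => i _.
by rewrite mxE mulr_sumr; apply: eq_bigr => j _; rewrite mxE; ring.
Qed.

End FrobeniusNorm.

Section FrobeniusInnerProduct.
Variables (R : realType) (p k : nat).
Implicit Types (M N : 'M[R]_(p, k)).

Definition fdot M N : R := \sum_(x : 'I_p * 'I_k) M x.1 x.2 * N x.1 x.2.

Lemma fdot_row M N : fdot M N = \sum_l edot (row l M 0) (row l N 0).
Proof.
rewrite /fdot -(pair_bigA _ (fun l t => M l t * N l t)) /=.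
by apply: eq_bigr => l _; apply: eq_bigr => t _; rewrite !mxE.
Qed.

Lemma fdot_col M N : fdot M N = \sum_t edot (col t M ^~ 0) (col t N ^~ 0).
Proof.
rewrite /fdot -(pair_bigA _ (fun l t => M l t * N l t)) /= exchange_big.
by apply: eq_bigr => t _; apply: eq_bigr => l _; rewrite !mxE.
Qed.

Lemma fdot0l M : fdot 0 M = 0.
Proof. by rewrite /fdot big1 // => x _; rewrite mxE mul0r. Qed.

Lemma fdot_ge0 M : 0 <= fdot M M.
Proof. by apply: sumr_ge0 => x _; rewrite -expr2 sqr_ge0. Qed.

Lemma sqr_le_fdot M l t : M l t ^+ 2 <= fdot M M.
Proof.
rewrite /fdot (bigD1 (l, t)) //= -expr2 lerDl.
by apply: sumr_ge0 => x _; rewrite -expr2 sqr_ge0.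
Qed.

Lemma fdot_le_card M d : (forall l t, `|M l t| <= d) -> fdot M M <= (p * k)%:R * d ^+ 2.
Proof.
move=> M_le; have -> : (p * k)%N = #|{: 'I_p * 'I_k}| by rewrite card_prod !card_ord.
rewrite -sum1_card natr_sum mulr_suml.
apply: ler_sum => x _; rewrite mul1r -expr2 -real_normK ?num_real //.
by rewrite lerXn2r ?nnegrE ?normr_ge0 ?(le_trans (normr_ge0 _) (M_le x.1 x.2)).
Qed.

Lemma fdot_three_point (a : R) G Z B B' :
  fdot G (B' - B) - fdot G (Z - B) + a / 2 * fdot (B' - B) (B' - B)
    - fdot (Z - B') (a *: (B - B') - G)
  = a / 2 * fdot (Z - B) (Z - B) - a / 2 * fdot (Z - B') (Z - B').
Proof.
rewrite /fdot !mulr_sumr -!sumrB -big_split -sumrB /=.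
by apply: eq_bigr => x _; rewrite !mxE; field.
Qed.

End FrobeniusInnerProduct.

Lemma soft_thrE (R : realType) (m : nat) (a : 'rV[R]_m) (mu : R) :
  soft_thr a mu = (Num.max (rnorm a - mu) 0 / rnorm a) *: a.
Proof. by rewrite /soft_thr; case: eqP => [->|]; rewrite ?scaler0. Qed.

Lemma soft_thr_prox (R : realType) (m : nat) (a z : 'rV[R]_m) (mu : R) :
  0 <= mu ->
  edot (fun j => z 0 j - soft_thr a mu 0 j) (fun j => a 0 j - soft_thr a mu 0 j)
    <= mu * rnorm z - mu * rnorm (soft_thr a mu).
Proof.
move=> mu0; rewrite soft_thrE.
set r := rnorm a; set c := Num.max (r - mu) 0 / r.
have r0 : 0 <= r := enorm_ge0 _.
have c0 : 0 <= c by rewrite divr_ge0 // le_max lexx orbT.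
have cs : edot (z 0) (a 0) <= rnorm z * r := edot_le _ _.
have rz0 : 0 <= rnorm z := enorm_ge0 _.
have -> : edot (fun j => z 0 j - (c *: a) 0 j) (fun j => a 0 j - (c *: a) 0 j)
          = (1 - c) * edot (z 0) (a 0) - (1 - c) * c * r ^+ 2.
  rewrite /r rnormE enorm_sqr /edot !mulr_sumr -sumrB.
  by apply: eq_bigr => j _; rewrite mxE; ring.
rewrite rnormZ ger0_norm // -/r.
have [r_le_mu | mu_lt_r] := lerP r mu.
  have -> : c = 0 by rewrite /c max_r ?subr_le0 // mul0r.
  by nra.
have r_gt0 : 0 < r by apply: le_lt_trans mu_lt_r.
have c1 : 1 - c = mu / r.
  by rewrite /c max_l ?subr_ge0 ?ltW //; field; rewrite gt_eqF.
rewrite c1 (_ : mu / r * c * r ^+ 2 = mu * (c * r)); last by field; rewrite gt_eqF.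
have : mu / r * edot (z 0) (a 0) <= mu / r * (rnorm z * r).
  by rewrite ler_wpM2l // divr_ge0.
rewrite (_ : mu / r * (rnorm z * r) = mu * rnorm z); last by field; rewrite gt_eqF.
lra.
Qed.

Definition penalty (R : realType) (p k : nat) (B : 'M[R]_(p, k)) : R :=
  \sum_l rnorm (row l B).

Lemma soft_thr_rows_prox (R : realType) (p k : nat) (A lam : R)
    (B G Z B' : 'M[R]_(p, k)) :
  0 < A -> 0 <= lam ->
  (forall l, row l B' = soft_thr (row l B - A^-1 *: row l G) (lam / A)) ->
  fdot (Z - B') (A *: (B - B') - G) <= lam * penalty Z - lam * penalty B'.
Proof.
move=> A_gt0 lam_ge0 rowB'.
rewrite fdot_row /penalty !mulr_sumr -sumrB; apply: ler_sum => l _.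
set a := row l B - A^-1 *: row l G.
have := soft_thr_prox a (row l Z) (divr_ge0 lam_ge0 (ltW A_gt0)).
rewrite -rowB' => /(ler_wpM2l (ltW A_gt0)) prox.
have -> : edot (row l (Z - B') 0) (row l (A *: (B - B') - G) 0)
          = A * edot (fun j => row l Z 0 j - row l B' 0 j)
                     (fun j => a 0 j - row l B' 0 j).
  by rewrite /edot mulr_sumr; apply: eq_bigr => j _; rewrite !mxE; field; rewrite gt_eqF.
rewrite (_ : lam * _ - _ = A * (lam / A * rnorm (row l Z) - lam / A * rnorm (row l B'))) //.
by field; rewrite gt_eqF.
Qed.

Lemma n0_gt0 (k : nat) (n : 'I_k -> nat) :
  (0 < k)%N -> (forall t, 0 < n t)%N -> (0 < n0 n)%N.
Proof.
move=> k_gt0 n_gt0; rewrite /n0; elim/big_ind: _ => // [|x y x0 y0].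
  by rewrite /nmax (bigD1 (Ordinal k_gt0)) //=; apply: leq_trans (n_gt0 _) (leq_maxl _ _).
by rewrite leq_min x0 y0.
Qed.

Lemma sqrt_n0_gt0 (R : realType) (k : nat) (n : 'I_k -> nat) :
  (0 < n0 n)%N -> 0 < Num.sqrt ((n0 n)%:R : R).
Proof. by move=> n0_gt0; rewrite sqrtr_gt0 ltr0n. Qed.

Lemma mx_bounded_cluster (R : realType) (p k : nat) (u : nat -> 'M[R]_(p, k)) (M : R) :
  (forall m l t, `|u m l t| <= M) ->
  exists c : 'M[R]_(p, k), forall d N, 0 < d ->
    exists2 m, (N <= m)%N & forall l t, `|c l t - u m l t| < d.
Proof.
move=> u_le; pose v m := mxvec (u m).
pose K := [set w : 'rV[R]_(p * k) | forall i, `[- M, M]%classic (w ord0 i)].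
have K_compact : compact K.
  by apply: (@rV_compact _ _ (fun _ => `[- M, M]%classic)) => _; apply: segment_compact.
have vK : (v @ \oo) K.
  exists 0%N => // m _ i; rewrite /v; case/mxvec_indexP: i => l t.
  by rewrite mxvecE /= in_itv /= -ler_norml.
have [c [_ c_cluster]] := K_compact _ _ vK.
exists (vec_mx c) => d N d_gt0.
pose tail := [set w : 'rV[R]_(p * k) | exists2 m, (N <= m)%N & w = v m].
pose ball_c := [set w : 'rV[R]_(p * k) | forall j, `|c 0 j - w 0 j| < d].
have tail_ev : (v @ \oo) tail by exists N => // m /= Nm; exists m.
have ball_nbhs : nbhs c ball_c.
  apply/nbhs_ballP; exists d => // w cw j.
  by move: cw => [_ /(_ 0 j)]; rewrite -ball_normE.
have [w [[m Nm ->] cw]] := c_cluster tail ball_c tail_ev ball_nbhs.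
exists m => // l t; have := cw (mxvec_index l t).
by rewrite /v !mxvecE -{1}(vec_mxK c) mxvecE.
Qed.

Section ResidualNorm.
Variables (R : realType) (m p : nat) (M : 'M[R]_(m, p)) (y : 'cV[R]_m)
  (s : R) (b : 'cV[R]_p).
Hypothesis s_gt0 : 0 < s.
Hypothesis resid_gt0 : 0 < cnorm (M *m b - y).

Let u := M *m b - y.
Let grad := (s * cnorm u)^-1 *: (M^T *m u).

Lemma cnorm_resid_shift z :
  cnorm (M *m z - y) = enorm (fun i => u i 0 + (M *m (z - b)) i 0).
Proof.
rewrite cnormE; congr enorm; apply/funext => i.
by rewrite /u mulmxBr !mxE; ring.
Qed.

Lemma edot_grad z :
  edot (grad ^~ 0) ((z - b) ^~ 0)
  = s^-1 * (edot (u ^~ 0) ((M *m (z - b)) ^~ 0) / cnorm u).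
Proof.
rewrite -edot_trmx_mul /edot mulr_suml mulr_sumr; apply: eq_bigr => l _.
by rewrite mxE; field; rewrite !gt_eqF.
Qed.

Lemma resid_norm_ge_tangent z :
  s^-1 * cnorm u + edot (grad ^~ 0) ((z - b) ^~ 0) <= s^-1 * cnorm (M *m z - y).
Proof.
rewrite edot_grad cnorm_resid_shift -mulrDr ler_pM2l ?invr_gt0 //.
exact: enormD_ge_tangent.
Qed.

Lemma resid_norm_le_majorant (L : R) z : (s * cnorm u)^-1 <= L -> frob2 M <= 1 ->
  s^-1 * cnorm (M *m z - y)
    <= s^-1 * cnorm u + edot (grad ^~ 0) ((z - b) ^~ 0) + L / 2 * cnorm (z - b) ^+ 2.
Proof.
move=> invu_le M_le1.
have w_le : cnorm (M *m (z - b)) ^+ 2 <= cnorm (z - b) ^+ 2.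
  by rewrite lerXn2r ?nnegrE ?enorm_ge0 ?cnorm_mulmx_le.
have tangent : enorm (fun i => u i 0 + (M *m (z - b)) i 0)
    <= cnorm u + edot (u ^~ 0) ((M *m (z - b)) ^~ 0) / cnorm u
       + cnorm (M *m (z - b)) ^+ 2 / (2 * cnorm u).
  exact: enormD_le_tangent.
have sinv_ge0 : 0 <= s^-1 by rewrite invr_ge0 ltW.
rewrite edot_grad cnorm_resid_shift.
apply: le_trans (ler_wpM2l sinv_ge0 tangent) _.
have -> : s^-1 * (cnorm u + edot (u ^~ 0) ((M *m (z - b)) ^~ 0) / cnorm u
                  + cnorm (M *m (z - b)) ^+ 2 / (2 * cnorm u))
  = s^-1 * cnorm u + s^-1 * (edot (u ^~ 0) ((M *m (z - b)) ^~ 0) / cnorm u)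
    + (s * cnorm u)^-1 / 2 * cnorm (M *m (z - b)) ^+ 2.
  by rewrite /u; field; rewrite !gt_eqF.
rewrite lerD2l.
have invu_ge0 : 0 <= (s * cnorm u)^-1 by rewrite invr_ge0 mulr_ge0 ?ltW.
apply: le_trans (ler_wpM2l _ w_le) _; first by rewrite divr_ge0.
by rewrite ler_wpM2r ?sqr_ge0 // ler_pM2r.
Qed.

End ResidualNorm.

Section ProximalStep.
Variables (R : realType) (k p : nat) (n : 'I_k -> nat)
  (X : forall t : 'I_k, 'M[R]_(n t, p)) (Y : forall t : 'I_k, 'cV[R]_(n t))
  (lam : R).
Hypothesis lam_ge0 : 0 <= lam.
Hypothesis frob2X_le1 : forall t, frob2 (X t) <= 1.
Implicit Types B Z : 'M[R]_(p, k).

Let s := Num.sqrt ((n0 n)%:R : R).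

Definition loss B : R := s^-1 * \sum_t cnorm (Y t - X t *m col t B).

Lemma objFE B : objF X Y lam B = loss B + lam * penalty B.
Proof. by []. Qed.

Lemma objF_ge_entry B l t : lam * `|B l t| <= objF X Y lam B.
Proof.
have loss_ge0 : 0 <= loss B.
  by rewrite mulr_ge0 ?invr_ge0 ?sqrtr_ge0 // sumr_ge0 // => t' _; apply: enorm_ge0.
rewrite objFE -[X in X <= _]add0r lerD // ler_wpM2l //.
apply: le_trans (_ : rnorm (row l B) <= _).
  by have := ler_norm_enorm (row l B 0) t; rewrite mxE.
rewrite /penalty (bigD1 l) //= lerDl.
by apply: sumr_ge0 => l' _; apply: enorm_ge0.
Qed.

Lemma objF_lipschitz B B' d : 0 <= d -> (forall l t, `|B l t - B' l t| <= d) ->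
  objF X Y lam B <= objF X Y lam B' + (s^-1 + lam) * (k * p)%:R * d.
Proof.
move=> d0 B_near.
have col_le t : cnorm (Y t - X t *m col t B)
                <= cnorm (Y t - X t *m col t B') + p%:R * d.
  have -> : Y t - X t *m col t B = (Y t - X t *m col t B') - X t *m col t (B - B').
    by rewrite linearB mulmxBr opprB addrA subrK.
  apply: le_trans (cnormD_le _ _) _; rewrite cnormN lerD2l.
  apply: le_trans (cnorm_mulmx_le _ (frob2X_le1 t)) _.
  by rewrite -[in X in X%:R * _](card_ord p); apply: enorm_le_card => // l; rewrite !mxE.
have row_le l : rnorm (row l B) <= rnorm (row l B') + k%:R * d.
  have -> : row l B = row l B' + row l (B - B') by rewrite linearB addrC subrK.
  apply: le_trans (rnormD_le _ _) _; rewrite lerD2l.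
  by rewrite -[in X in X%:R * _](card_ord k); apply: enorm_le_card => // t; rewrite !mxE.
have sinv_ge0 : 0 <= s^-1 by rewrite invr_ge0 sqrtr_ge0.
have loss_le : loss B <= loss B' + s^-1 * ((k * p)%:R * d).
  rewrite /loss -mulrDr ler_wpM2l // natrM -mulrA.
  apply: le_trans (ler_sum _ (fun t _ => col_le t)) _.
  by rewrite big_split sumr_const card_ord (mulr_natl _ k).
have penalty_le : penalty B <= penalty B' + (k * p)%:R * d.
  rewrite /penalty mulnC natrM -mulrA.
  apply: le_trans (ler_sum _ (fun l _ => row_le l)) _.
  by rewrite big_split sumr_const card_ord (mulr_natl _ p).
have := ler_wpM2l lam_ge0 penalty_le.
by rewrite !objFE -mulrA mulrDl mulrDr; lra.
Qed.

Section Step.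
Variable B : 'M[R]_(p, k).
Hypotheses (k_gt0 : (0 < k)%N) (n0_gt0 : (0 < n0 n)%N).
Hypothesis resid_gt0 : forall t, 0 < cnorm (X t *m col t B - Y t).

Let A := Acoef X Y B.
Let G := Rmat X Y B.
Let B' := ist_step X Y lam B.

Lemma rden_gt0 t : 0 < rden X Y B t.
Proof. by rewrite mulr_gt0 ?(sqrt_n0_gt0 R n0_gt0). Qed.

Lemma rden_inv_le_Acoef t : (rden X Y B t)^-1 <= A.
Proof.
rewrite /A /Acoef (bigD1 t) //= lerDl.
by apply: sumr_ge0 => t' _; rewrite invr_ge0 ltW ?rden_gt0.
Qed.

Lemma Acoef_gt0 : 0 < A.
Proof.
by apply: lt_le_trans (rden_inv_le_Acoef (Ordinal k_gt0)); rewrite invr_gt0 rden_gt0.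
Qed.

Lemma col_Rmat t : col t G = (rden X Y B t)^-1 *: ((X t)^T *m (X t *m col t B - Y t)).
Proof. by apply/colP => l; rewrite !mxE. Qed.

Lemma loss_ge_tangent Z : loss B + fdot G (Z - B) <= loss Z.
Proof.
rewrite /loss fdot_col !mulr_sumr -big_split /=.
apply: ler_sum => t _.
rewrite -[Y t - _]opprB -[Y t - X t *m col t Z]opprB !cnormN col_Rmat [col t (Z - B)]linearB.
exact: resid_norm_ge_tangent (sqrt_n0_gt0 R n0_gt0) (resid_gt0 t) (col t Z).
Qed.

Lemma loss_le_majorant Z :
  loss Z <= loss B + fdot G (Z - B) + A / 2 * fdot (Z - B) (Z - B).
Proof.
rewrite /loss !fdot_col !mulr_sumr -!big_split /=.
apply: ler_sum => t _.
rewrite -[Y t - _]opprB -[Y t - X t *m col t B]opprB !cnormN col_Rmat [col t (Z - B)]linearB edotxx.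
apply: (resid_norm_le_majorant (sqrt_n0_gt0 R n0_gt0) (resid_gt0 t)).
  exact: rden_inv_le_Acoef.
exact: frob2X_le1.
Qed.

Lemma penalty_prox Z :
  fdot (Z - B') (A *: (B - B') - G) <= lam * penalty Z - lam * penalty B'.
Proof.
by apply: soft_thr_rows_prox Acoef_gt0 lam_ge0 _ => l; apply/rowP => j; rewrite !mxE.
Qed.

Lemma ist_step_three_point Z :
  objF X Y lam B' + A / 2 * fdot (Z - B') (Z - B')
    <= objF X Y lam Z + A / 2 * fdot (Z - B) (Z - B).
Proof.
have majorant := loss_le_majorant B'.
have tangent := loss_ge_tangent Z.
have prox := penalty_prox Z.
have := fdot_three_point A G Z B B'.
by rewrite !objFE; lra.
Qed.

End Step.

End ProximalStep.

Section MajorizedDescent.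
Variables (R : realType) (p k : nat) (G : 'M[R]_(p, k) -> R)
  (beta : nat -> 'M[R]_(p, k)) (A : nat -> R) (Amax c C : R).
Implicit Types B Z Bs : 'M[R]_(p, k).
Hypothesis A_gt0 : forall m, 0 < A m.
Hypothesis A_le : forall m, A m <= Amax.
Hypothesis c_gt0 : 0 < c.
Hypothesis G_ge_entry : forall B l t, c * `|B l t| <= G B.
Hypothesis G_lipschitz : forall B (B' : 'M[R]_(p, k)) d, 0 <= d ->
  (forall l t, `|B l t - B' l t| <= d) -> G B <= G B' + C * d.
Hypothesis three_point : forall m Z,
  G (beta m.+1) + A m / 2 * fdot (Z - beta m.+1) (Z - beta m.+1)
    <= G Z + A m / 2 * fdot (Z - beta m) (Z - beta m).

Let dist2 Z m := fdot (Z - beta m) (Z - beta m).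

Lemma dist2_ge0 Z m : 0 <= dist2 Z m.
Proof. exact: fdot_ge0. Qed.

Lemma G_iter_nonincr : {homo G \o beta : m m' / (m <= m')%N >-> m' <= m}.
Proof.
apply/nonincreasing_seqP => m /=; have := three_point m (beta m).
rewrite subrr fdot0l mulr0 addr0.
by have := fdot_ge0 (beta m - beta m.+1); have := A_gt0 m; nra.
Qed.

Lemma iter_bounded m l t : `|beta m l t| <= G (beta 0) / c.
Proof.
rewrite ler_pdivlMr // mulrC; apply: le_trans (G_ge_entry _ l t) _.
exact: (G_iter_nonincr (leq0n m)).
Qed.

Lemma dist2_decrease Z e : 0 < e -> (forall m, G Z + e < G (beta m)) ->
  forall m, dist2 Z m.+1 <= dist2 Z m - 2 * e / Amax.
Proof.
move=> e_gt0 G_gt m; have G_lt := G_gt m.+1; have step := three_point m Z.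
have Am_gt0 := A_gt0 m; have Amax_gt0 : 0 < Amax := lt_le_trans Am_gt0 (A_le m).
have step_le : 2 * e / Amax <= 2 * e / A m.
  by rewrite ler_pM2l ?mulr_gt0 // lef_pV2 ?posrE.
suff : A m / 2 * (dist2 Z m.+1 - dist2 Z m) <= - e.
  rewrite -(ler_pM2l (_ : 0 < 2 / A m)) ?divr_gt0 // mulrA.
  rewrite (_ : 2 / A m * (A m / 2) = 1) ?mul1r; last by field; rewrite gt_eqF.
  rewrite (_ : 2 / A m * - e = - (2 * e / A m)); last by field; rewrite gt_eqF.
  by move: step_le; rewrite /dist2; lra.
by rewrite mulrBr /dist2; lra.
Qed.

Lemma G_iter_approach Z e : 0 < e ->
  exists N, forall m, (N <= m)%N -> G (beta m) <= G Z + e.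
Proof.
move=> e_gt0.
suff [N GN_le] : exists N, G (beta N) <= G Z + e.
  by exists N => m Nm; apply: le_trans (G_iter_nonincr Nm) GN_le.
apply: contrapT => /forallNP G_gt.
have {}G_gt m : G Z + e < G (beta m) by rewrite ltNge; apply/negP/G_gt.
have Amax_gt0 : 0 < Amax := lt_le_trans (A_gt0 0) (A_le 0).
set d := 2 * e / Amax; have d_gt0 : 0 < d by rewrite divr_gt0 ?mulr_gt0.
have dist2_le m : dist2 Z m <= dist2 Z 0 - m%:R * d.
  elim: m => [|m IH]; first by rewrite mul0r subr0.
  by apply: le_trans (dist2_decrease e_gt0 G_gt m) _; rewrite -/d -natr1; lra.
pose M := Num.Def.archi_bound (dist2 Z 0 / d).
have : dist2 Z 0 / d < M%:R by apply: archi_boundP; rewrite divr_ge0 ?dist2_ge0 ?ltW.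
rewrite ltr_pdivrMr // => M_large.
by have := dist2_le M; have := dist2_ge0 Z M; lra.
Qed.

Lemma C_ge0 : 0 <= C.
Proof.
have near_self l t : `|beta 0 l t - beta 0 l t| <= 1 by rewrite subrr normr0 ler01.
by have := G_lipschitz ler01 near_self; rewrite mulr1 lerDl.
Qed.

Lemma cluster_minimizer Bs :
  (forall d N, 0 < d -> exists2 m, (N <= m)%N & forall l t, `|Bs l t - beta m l t| < d) ->
  forall Z, G Bs <= G Z.
Proof.
move=> Bs_cluster Z; apply/ler_addgt0Pr => e e_gt0.
have [N G_near] := G_iter_approach Z (divr_gt0 e_gt0 (ltr0n _ 2)).
have C1_gt0 : 0 < C + 1 by rewrite ltr_wpDl ?C_ge0.
have d_gt0 : 0 < e / 2 / (C + 1) by rewrite !divr_gt0.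
have [m Nm Bs_near] := Bs_cluster _ N d_gt0.
have := G_lipschitz (ltW d_gt0) (fun l t => ltW (Bs_near l t)).
have := G_near m Nm.
have : C * (e / 2 / (C + 1)) <= e / 2.
  rewrite mulrCA ler_piMr ?divr_ge0 ?ltW //.
  by rewrite ltr_pdivrMr // mul1r ltrDl.
lra.
Qed.

Lemma dist2_minimizer_nonincr Bs : (forall Z, G Bs <= G Z) ->
  {homo dist2 Bs : m m' / (m <= m')%N >-> m' <= m}.
Proof.
move=> Bs_min; apply/nonincreasing_seqP => m.
have := three_point m Bs; have := Bs_min (beta m.+1); have := A_gt0 m.
rewrite /dist2 => Am_gt0 G_le.
have : 0 < A m / 2 by rewrite divr_gt0.
by nra.
Qed.

Theorem majorized_descent_cvg : exists Bs : 'M[R]_(p, k),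
  (forall Z, G Bs <= G Z) /\ forall l t, (fun m => beta m l t) @ \oo --> Bs l t.
Proof.
have [Bs Bs_cluster] := mx_bounded_cluster iter_bounded.
have Bs_min := cluster_minimizer Bs_cluster.
exists Bs; split => // l t; apply/cvgrPdist_lt => e e_gt0.
set d := e / ((p * k)%:R + 1).
have d_gt0 : 0 < d by rewrite divr_gt0 // ltr_wpDl.
have [m0 _ Bs_near] := Bs_cluster d 0%N d_gt0.
have dist2_m0 : dist2 Bs m0 < e ^+ 2.
  have : dist2 Bs m0 <= (p * k)%:R * d ^+ 2.
    by apply: fdot_le_card => l' t'; rewrite !mxE; exact: ltW.
  have -> : e = d * ((p * k)%:R + 1) by rewrite divfK // gt_eqF // ltr_wpDl.
  have : 0 < d ^+ 2 by rewrite exprn_gt0.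
  have : 0 <= (p * k)%:R :> R by [].
  by nra.
exists m0 => // m /= m0m.
have := sqr_le_fdot (Bs - beta m) l t; rewrite !mxE => sqr_le.
have := le_lt_trans (le_trans sqr_le (dist2_minimizer_nonincr Bs_min m0m)) dist2_m0.
by rewrite -real_normK ?num_real // ltr_pXn2r // ?nnegrE ?normr_ge0 ?ltW.
Qed.

End MajorizedDescent.

Lemma objF_scale (R : realType) (k p : nat) (n : 'I_k -> nat)
    (X : forall t : 'I_k, 'M[R]_(n t, p)) (Y : forall t : 'I_k, 'cV[R]_(n t))
    (lam c : R) (B : 'M[R]_(p, k)) :
  0 <= c ->
  objF (fun t => c *: X t) (fun t => c *: Y t) (lam * c) B = c * objF X Y lam B.
Proof.
move=> c_ge0; rewrite /objF.
have -> : \sum_t cnorm (c *: Y t - c *: X t *m col t B)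
          = c * \sum_t cnorm (Y t - X t *m col t B).
  rewrite mulr_sumr; apply: eq_bigr => t _.
  by rewrite -scalemxAl -scalerBr cnormZ ger0_norm.
ring.
Qed.

Section ScaledIterates.
Variables (R : realType) (k p : nat) (n : 'I_k -> nat)
  (X : forall t : 'I_k, 'M[R]_(n t, p)) (Y : forall t : 'I_k, 'cV[R]_(n t))
  (lam K0 c1 : R) (B0 : 'M[R]_(p, k)).
Hypotheses (k_gt0 : (0 < k)%N) (lam_gt0 : 0 < lam) (K0_ge1 : 1 <= K0).
Hypothesis frob2X_le : forall t, frob2 (X t) <= K0.
Hypothesis c1_gt0 : 0 < c1.
Hypothesis resid_ge :
  forall t m, c1 <= cnorm (X t *m col t (scaled_iterates X Y lam K0 B0 m) - Y t).

Let Xs t := K0^-1 *: X t.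
Let Ys t := K0^-1 *: Y t.
Let beta := scaled_iterates X Y lam K0 B0.
Let s := Num.sqrt ((n0 n)%:R : R).

Lemma K0_gt0 : 0 < K0.
Proof. exact: lt_le_trans ltr01 K0_ge1. Qed.

Lemma frob2_scaled_le1 t : frob2 (Xs t) <= 1.
Proof.
have K0_le_sqr : K0 <= K0 ^+ 2 by rewrite expr2 ler_peMl // ltW ?K0_gt0.
rewrite frob2Z exprVn mulrC ler_pdivrMr ?exprn_gt0 ?K0_gt0 // mul1r.
exact: le_trans (frob2X_le t) K0_le_sqr.
Qed.

Lemma scaled_resid t B :
  cnorm (Xs t *m col t B - Ys t) = K0^-1 * cnorm (X t *m col t B - Y t).
Proof. by rewrite -scalemxAl -scalerBr cnormZ ger0_norm // invr_ge0 ltW ?K0_gt0. Qed.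

Lemma scaled_resid_ge t m : K0^-1 * c1 <= cnorm (Xs t *m col t (beta m) - Ys t).
Proof. by rewrite scaled_resid ler_pM2l ?invr_gt0 ?K0_gt0. Qed.

Lemma scaled_resid_gt0 t m : 0 < cnorm (Xs t *m col t (beta m) - Ys t).
Proof.
by apply: lt_le_trans (scaled_resid_ge t m); rewrite mulr_gt0 ?invr_gt0 ?K0_gt0.
Qed.

Lemma n0_iter_gt0 : (0 < n0 n)%N.
Proof.
apply: n0_gt0 => // t.
exact: cnorm_gt0_dim (lt_le_trans c1_gt0 (resid_ge t 0)).
Qed.

Lemma Acoef_iter_le m :
  Acoef Xs Ys (beta m) <= k%:R * (s * (K0^-1 * c1))^-1.
Proof.
have s_gt0 := sqrt_n0_gt0 R n0_iter_gt0.
rewrite mulr_natl -[in X in _ *+ X](card_ord k) -sumr_const.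
apply: ler_sum => t _.
rewrite lef_pV2 ?posrE ?mulr_gt0 ?scaled_resid_gt0 ?invr_gt0 ?K0_gt0 //.
by rewrite ler_pM2l ?scaled_resid_ge.
Qed.

Theorem scaled_iterates_cvg : exists Bs : 'M[R]_(p, k),
  (forall B, objF X Y lam Bs <= objF X Y lam B) /\
  forall l t, (fun m => beta m l t) @ \oo --> Bs l t.
Proof.
have lams_gt0 : 0 < lam / K0 by rewrite divr_gt0 ?K0_gt0.
have [Bs [Bs_min Bs_cvg]] := majorized_descent_cvg
  (G := objF Xs Ys (lam / K0)) (beta := beta) (A := fun m => Acoef Xs Ys (beta m))
  (fun m => Acoef_gt0 k_gt0 n0_iter_gt0 (scaled_resid_gt0 ^~ m))
  Acoef_iter_le lams_gt0 (objF_ge_entry Xs Ys (ltW lams_gt0))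
  (objF_lipschitz Ys (ltW lams_gt0) frob2_scaled_le1)
  (fun m => ist_step_three_point (ltW lams_gt0) frob2_scaled_le1 k_gt0 n0_iter_gt0
              (scaled_resid_gt0 ^~ m)).
exists Bs; split => // B.
have := Bs_min B; rewrite /Xs /Ys !objF_scale ?invr_ge0 ?(ltW K0_gt0) //.
by rewrite ler_pM2l // invr_gt0 K0_gt0.
Qed.

End ScaledIterates.

Unset Implicit Arguments.

Theorem theorem6 (R : realType) (k p : nat) (n : 'I_k -> nat)
  (X : forall t : 'I_k, 'M[R]_(n t, p)) (Y : forall t : 'I_k, 'cV[R]_(n t))
  (lam : R) (B0 : 'M[R]_(p, k)) (c0 : R) :
  0 < lam -> 0 < c0 ->
  exists Kstar : R, forall K0 : R, 0 < K0 -> Kstar <= K0 ->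
    (* min_t inf_{zeta in A^t} ||X^(t) zeta - Y^(t)|| > c0 *)
    (exists c1 : R, c0 < c1 /\
       forall (t : 'I_k) (m : nat) (v : R), 0 <= v <= 1 ->
         c1 <= cnorm (X t *m (v *: col t (scaled_iterates X Y lam K0 B0 m)
                         + (1 - v) *: col t (scaled_iterates X Y lam K0 B0 m.+1))
                      - Y t)) ->
    exists Bstar : 'M[R]_(p, k),
      (forall B : 'M[R]_(p, k), objF X Y lam Bstar <= objF X Y lam B) /\
      (forall (i : 'I_p) (j : 'I_k),
         (fun m => scaled_iterates X Y lam K0 B0 m i j) @ \oo --> Bstar i j).
Proof.
move=> lam_gt0 c0_gt0.
have [k0 | k_gt0] := posnP k.
  subst k; exists 0 => K0 _ _ _; exists B0.
  by split => [B | i []//]; rewrite (thinmx0 B) (thinmx0 B0).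
exists (1 + \sum_t frob2 (X t)) => K0 _ K0_ge [c1 [c0_lt_c1 resid_ge]].
apply: scaled_iterates_cvg k_gt0 lam_gt0 _ _ (lt_trans c0_gt0 c0_lt_c1) _.
- by apply: le_trans K0_ge; rewrite lerDl sumr_ge0 // => t _; apply: frob2_ge0.
- move=> t; apply: le_trans K0_ge.
  by rewrite (bigD1 t) //= addrCA lerDl addr_ge0 ?sumr_ge0 // => t' _; apply: frob2_ge0.
- move=> t m; have := resid_ge t m 1.
  by rewrite ler01 lexx scale1r subrr scale0r addr0; apply.
Qed.
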